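(* Consider the standard sequential oligopoly with linear inverse demand $P(X)=a(\overline{X}-X)$, $a>0$, constant marginal cost $c\ge 0$ with $\overline{X}_c:=\overline{X}-\frac{c}{a}>0$, and a random arrival process of firms that never has arrivals after some finite period $T$. Let each firm hold arbitrary beliefs about the future arrival process (possibly different across firms, possibly depending on the observed cumulative quantity, the individual quantities of leaders, and any public or private signals). Then in every equilibrium, for every realization $\boldsymbol{n}=(n_1,\dots,n_T)$ of the arrival process, the total equilibrium quantity and individual quantities are $$X^*=\left[1-\frac{1}{\prod_{s=1}^T(1+n_s)}\right]\overline{X}_c,\qquad x_i^*=\frac{\overline{X}_c}{\prod_{s=1}^t(1+n_s)}\quad\text{for all } t\in\{1,\dots,T\},\ i\in\mathcal{I}_t .$$ In particular, the equilibrium quantity of each firm does not depend on the realized numbers of its followers $(n_{t+1},\dots,n_T)$ nor on the firm's beliefs about them.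
   Context: Firms produce a homogeneous good, each with constant marginal cost $c\ge0$; firm $i$ chooses $x_i\ge 0$, total quantity is $X=\sum_i x_i$, and firm $i$'s profit is $x_i(P(X)-c)$. Firms are partitioned into periods: $\mathcal{I}_t$ is the set of firms arriving in period $t$, $n_t=\#\mathcal{I}_t$. A firm $i\in\mathcal{I}_t$ observes the cumulative quantity $X_{t-1}=\sum_{s<t}\sum_{j\in\mathcal{I}_s}x_j$ of all earlier firms and the number $n_t$, and chooses $x_i$ simultaneously with the other firms in period $t$. In the stochastic version, the sequence $\boldsymbol{n}=(n_1,\dots,n_T)$ is a random variable with arbitrary distribution, and each firm maximizes its expected profit given its beliefs about the future arrivals $(n_{t+1},\dots,n_T)$; equilibrium means subgame perfect (sequentially rational) behavior with interior solutions. *)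

From Stdlib Require Import Reals Lra Arith.
Open Scope R_scope.

(* Periods are indexed 0 .. T-1 (paper: 1 .. T).  The j-th firm arriving in
   period t (j < n t) is the firm (t, j). *)

(* A realization of the arrival process: n t = number of firms in period t. *)
Definition arrivals := nat -> nat.

(* A history of quantities: h s j = quantity of the j-th firm of period s. *)
Definition history := nat -> nat -> R.

Fixpoint sum_upto (k : nat) (f : nat -> R) : R :=
  match k with O => 0 | S k' => sum_upto k' f + f k' end.

Fixpoint prod_upto (k : nat) (f : nat -> R) : R :=
  match k with O => 1 | S k' => prod_upto k' f * f k' end.

Definition total (T : nat) (n : arrivals) (h : history) : R :=
  sum_upto T (fun s => sum_upto (n s) (fun j => h s j)).

Definition price (a Xbar X : R) : R := a * (Xbar - X).

(* Information available at period t: arrivals of periods <= t,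
   quantities of periods < t. *)
Definition trunc_arr (t : nat) (n : arrivals) : arrivals :=
  fun s => if (s <=? t)%nat then n s else O.
Definition trunc_hist (t : nat) (h : history) : history :=
  fun s j => if (s <? t)%nat then h s j else 0.

(* Realized arrivals up to period t, followed by the (believed) future w. *)
Definition splice (t : nat) (n w : arrivals) : arrivals :=
  fun s => if (s <=? t)%nat then n s else w s.

(* A strategy profile: sigma t j m h = quantity of firm (t, j), given the
   arrivals m of periods <= t and the quantities h of earlier firms. *)
Definition strategy := nat -> nat -> arrivals -> history -> R.

Definition act (sigma : strategy) (t j : nat) (n : arrivals) (h : history) : R :=
  sigma t j (trunc_arr t n) (trunc_hist t h).

Definition step (sigma : strategy) (n : arrivals) (t : nat) (h : history) : history :=
  fun s j => if (s =? t)%nat then act sigma t j n h else h s j.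

Fixpoint play (sigma : strategy) (n : arrivals) (k t : nat) (h : history) : history :=
  match k with
  | O => h
  | S k' => play sigma n k' (S t) (step sigma n t h)
  end.

Definition deviate (sigma : strategy) (n : arrivals) (t i : nat) (x : R) (h : history)
  : history :=
  fun s j => if (s =? t)%nat then (if (j =? i)%nat then x else act sigma t j n h)
             else h s j.

Definition profit (a Xbar c : R) (T : nat) (sigma : strategy) (n : arrivals)
  (t i : nat) (x : R) (h : history) : R :=
  let hf := play sigma n (T - S t) (S t) (deviate sigma n t i x h) in
  x * (price a Xbar (total T n hf) - c).

(* A belief about the future arrivals: an arbitrary (countably supported, hence
   arbitrary, since the space of arrival sequences is countable) probability
   distribution, given as a mixture: scenario k has probability weight k. *)
Record belief := mkBelief { weight : nat -> R; scenario : nat -> arrivals }.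

Definition is_belief (b : belief) : Prop :=
  (forall k, 0 <= weight b k) /\ infinite_sum (weight b) 1.

(* beta t i n h = belief of firm (t, i), which may depend on the whole realized
   arrival sequence n (private/public signals), on the earlier quantities h,
   and may differ across firms. *)
Definition beliefs := nat -> nat -> arrivals -> history -> belief.

Definition expected_profit (a Xbar c : R) (T : nat) (sigma : strategy)
  (n : arrivals) (t i : nat) (b : belief) (x : R) (h : history) (v : R) : Prop :=
  infinite_sum
    (fun k => weight b k * profit a Xbar c T sigma (splice t n (scenario b k)) t i x h) v.

(* Subgame perfect (sequentially rational) equilibrium: at every realization,
   every history, every firm chooses a nonnegative quantity maximizing its
   expected profit among all nonnegative quantities. *)
Definition equilibrium (a Xbar c : R) (T : nat) (sigma : strategy) (beta : beliefs)
  : Prop :=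
  forall (n : arrivals) (t i : nat) (h : history),
    (t < T)%nat -> (i < n t)%nat ->
    let b := beta t i n (trunc_hist t h) in
    0 <= act sigma t i n h /\
    exists v, expected_profit a Xbar c T sigma n t i b (act sigma t i n h) h v /\
      forall x v', 0 <= x -> expected_profit a Xbar c T sigma n t i b x h v' -> v' <= v.

From Stdlib Require Import Reals Lra Lia Arith Classical FunctionalExtensionality.
Open Scope R_scope.

(* Write Xc = Xbar - c/a and call Xc minus the cumulative quantity the residual
   demand.  The key invariant (the "residual law", proved by backward induction)
   is: starting at period t, whatever the history, the final residual demand
   equals the current one Z divided by the product of the (1 + n_s) over the
   remaining periods, or stays Z when Z <= 0.  Under this law, firm (t, i)
   choosing x faces the profit x * a * (r - x) / G in each future scenario, G >= 1
   being the scenario's growth factor and r the residual left by everyone else;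
   averaging over any belief only multiplies this by a positive constant (1 or
   the mean of 1/G), so the unique best reply is max(0, r/2).  The simultaneous
   firms of period t thus play the symmetric Cournot equilibrium, each producing
   Z / (1 + n_t), which divides the residual demand by 1 + n_t and propagates
   the law one period back. *)

Lemma sum_upto_ext m f g :
  (forall s, (s < m)%nat -> f s = g s) -> sum_upto m f = sum_upto m g.
Proof.
  induction m as [|m IH]; intro Hfg; simpl; [reflexivity|].
  rewrite IH by (intros; apply Hfg; lia). rewrite Hfg by lia. reflexivity.
Qed.

Lemma sum_upto_const m f C :
  (forall s, (s < m)%nat -> f s = C) -> sum_upto m f = INR m * C.
Proof.
  induction m as [|m IH]; intro Hf; cbn [sum_upto]; [simpl; lra|].
  rewrite IH by (intros; apply Hf; lia). rewrite Hf by lia. rewrite S_INR. ring.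
Qed.

Lemma sum_upto_replace m f x i : (i < m)%nat ->
  sum_upto m (fun j => if (j =? i)%nat then x else f j) = sum_upto m f - f i + x.
Proof.
  induction m as [|m IH]; intro Hi; simpl; [lia|].
  destruct (Nat.eq_dec i m) as [->|Hne].
  - rewrite Nat.eqb_refl, (sum_upto_ext m _ f); [ring|].
    intros s Hs. destruct (Nat.eqb_spec s m); [lia|reflexivity].
  - rewrite IH by lia. destruct (Nat.eqb_spec m i); [lia|]. ring.
Qed.

Lemma prod_upto_ge1 (n : arrivals) t : 1 <= prod_upto t (fun s => 1 + INR (n s)).
Proof.
  induction t as [|t IH]; simpl; [lra|]. pose proof (pos_INR (n t)). nra.
Qed.

Lemma infinite_sum_ext f g l :
  (forall k, f k = g k) -> infinite_sum f l -> infinite_sum g l.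
Proof. intros Hfg. replace g with f; auto. apply functional_extensionality; auto. Qed.

Lemma infinite_sum_scal f l C :
  infinite_sum f l -> infinite_sum (fun k => f k * C) (l * C).
Proof.
  intros Hf e He.
  assert (Hconst : Un_cv (fun _ : nat => C) C).
  { intros e' He'. exists O. intros. unfold Rdist. rewrite Rminus_diag, Rabs_R0. lra. }
  destruct (CV_mult _ _ _ _ Hf Hconst e He) as [N HN]. exists N. intros k Hk.
  specialize (HN k Hk). rewrite <- scal_sum, Rmult_comm. exact HN.
Qed.

Lemma mixture_of_inverses (w G : nat -> R) :
  (forall k, 0 <= w k) -> infinite_sum w 1 -> (forall k, 1 <= G k) ->
  exists mu, 0 < mu /\ infinite_sum (fun k => w k / G k) mu.
Proof.
  intros Hw Hs HG.
  assert (Hterm : forall k, 0 <= w k / G k).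
  { intro k. pose proof (HG k). apply Rmult_le_pos; [apply Hw|].
    left. apply Rinv_0_lt_compat. lra. }
  assert (Hmu : {mu | infinite_sum (fun k => w k / G k) mu}).
  { apply Rseries_CV_comp with (Bn := w); [|exists 1; exact Hs].
    intro k. split; [apply Hterm|]. pose proof (HG k). pose proof (Hw k).
    unfold Rdiv. rewrite <- (Rmult_1_r (w k)) at 2. apply Rmult_le_compat_l; auto.
    rewrite <- Rinv_1. apply Rinv_le_contravar; lra. }
  destruct Hmu as [mu Hmu]. exists mu. split; [|exact Hmu].
  (* some weight is positive, since the weights sum to 1 *)
  destruct (classic (exists k0, w k0 <> 0)) as [[k0 Hk0]|Hzero].
  - assert (Hpos : 0 < w k0 / G k0).
    { pose proof (Hw k0). pose proof (HG k0). apply Rmult_lt_0_compat; [lra|].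
      apply Rinv_0_lt_compat. lra. }
    assert (Hpartial : w k0 / G k0 <= sum_f_R0 (fun k => w k / G k) k0).
    { destruct k0 as [|k0]; simpl; [lra|].
      pose proof (cond_pos_sum _ k0 Hterm). lra. }
    pose proof (sum_incr _ k0 _ Hmu Hterm). lra.
  - assert (H0 : infinite_sum w 0).
    { replace 0 with (1 * 0) by ring. eapply infinite_sum_ext; [|apply infinite_sum_scal, Hs].
      intro k. destruct (Req_dec (w k) 0) as [->|Hk]; [ring|]. exfalso; eauto. }
    pose proof (uniqueness_sum _ _ _ Hs H0). lra.
Qed.

(* The residual demand Z after the remaining firms have divided it by the growth
   factor G; nothing is produced any more when Z <= 0. *)
Definition residual_after (Z G : R) : R := if Rle_dec Z 0 then Z else Z / G.

Lemma residual_after_1 Z : residual_after Z 1 = Z.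
Proof. unfold residual_after. destruct Rle_dec; [reflexivity|apply Rdiv_1_r]. Qed.

Lemma residual_after_pos Z G : 0 < Z -> residual_after Z G = Z / G.
Proof. intro HZ. unfold residual_after. destruct Rle_dec; [lra|reflexivity]. Qed.

Lemma residual_after_compose Z G1 G2 : 0 < G1 ->
  residual_after (residual_after Z G1) G2 = residual_after Z (G1 * G2).
Proof.
  intro HG1. unfold residual_after at 2 3.
  destruct (Rle_dec Z 0) as [HZ|HZ].
  - unfold residual_after. destruct Rle_dec; [reflexivity|lra].
  - rewrite residual_after_pos.
    + unfold Rdiv. rewrite Rinv_mult. ring.
    + apply Rdiv_lt_0_compat; lra.
Qed.

(* The unique maximizer of x * (r - x) over x >= 0. *)
Definition best_reply (r : R) : R := if Rle_dec r 0 then 0 else r / 2.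

Lemma expected_residual_profit (w G : nat -> R) a r x mu :
  infinite_sum w 1 -> (forall k, 1 <= G k) ->
  infinite_sum (fun k => w k / G k) mu ->
  infinite_sum (fun k => w k * (x * (a * residual_after (r - x) (G k))))
    ((if Rle_dec (r - x) 0 then 1 else mu) * (x * (a * (r - x)))).
Proof.
  intros Hs HG Hmu. unfold residual_after.
  destruct (Rle_dec (r - x) 0).
  - rewrite Rmult_comm. eapply infinite_sum_ext; [|apply infinite_sum_scal, Hs].
    intro k. simpl. ring.
  - eapply infinite_sum_ext; [|apply infinite_sum_scal, Hmu].
    intro k. simpl. pose proof (HG k). field. lra.
Qed.

Lemma best_reply_unique (w G : nat -> R) a r xs v :
  0 < a -> (forall k, 0 <= w k) -> infinite_sum w 1 -> (forall k, 1 <= G k) ->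
  0 <= xs ->
  infinite_sum (fun k => w k * (xs * (a * residual_after (r - xs) (G k)))) v ->
  (forall x v', 0 <= x ->
     infinite_sum (fun k => w k * (x * (a * residual_after (r - x) (G k)))) v' -> v' <= v) ->
  xs = best_reply r.
Proof.
  intros Ha Hw Hs HG Hxs Hv Hopt.
  destruct (mixture_of_inverses w G Hw Hs HG) as [mu [Hmu_pos Hmu]].
  pose proof (fun x => expected_residual_profit w G a r x mu Hs HG Hmu) as Hexp.
  assert (Hvalue := uniqueness_sum _ _ _ Hv (Hexp xs)). subst v.
  unfold best_reply. destruct (Rle_dec r 0) as [Hr|Hr].
  - (* non-positive residual demand: any positive quantity makes a loss *)
    pose proof (Hopt 0 _ (Rle_refl 0) (Hexp 0)) as Hzero.
    destruct (Rle_dec (r - 0) 0); [|lra].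
    destruct (Rle_dec (r - xs) 0); [|lra].
    assert (0 <= xs * (r - xs)).
    { apply Rmult_le_reg_l with a; [exact Ha|]. nra. }
    nra.
  - (* positive residual demand: the quantity r/2 earns mu * a * r^2/4 > 0 *)
    pose proof (Hopt (r / 2) _ ltac:(lra) (Hexp (r / 2))) as Hhalf.
    destruct (Rle_dec (r - r / 2) 0); [lra|].
    assert (0 < mu * (r / 2 * (a * (r - r / 2)))).
    { apply Rmult_lt_0_compat; [lra|]. apply Rmult_lt_0_compat; [lra|nra]. }
    destruct (Rle_dec (r - xs) 0).
    { assert (xs * (r - xs) <= 0) by nra.
      assert (xs * (a * (r - xs)) <= 0) by nra.
      lra. }
    assert (Hgap : mu * (r / 2 * (a * (r - r / 2))) - mu * (xs * (a * (r - xs)))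
                   = (mu * a) * ((xs - r / 2) * (xs - r / 2))) by field.
    assert (Hsq : (mu * a) * ((xs - r / 2) * (xs - r / 2)) = 0).
    { apply Rle_antisym; [lra|]. apply Rmult_le_pos; [nra|apply Rle_0_sqr]. }
    apply Rmult_integral in Hsq as [Hma|Hsq]; [nra|].
    apply Rmult_integral in Hsq as [Hx|Hx]; lra.
Qed.

(* Equilibrium quantity of each of m simultaneous firms on residual demand Z. *)
Definition cournot_share (Z : R) (m : nat) : R :=
  if Rle_dec Z 0 then 0 else Z / (1 + INR m).

Lemma cournot_fixed_point m (x : nat -> R) Z :
  (forall i, (i < m)%nat -> x i = best_reply (Z - (sum_upto m x - x i))) ->
  forall i, (i < m)%nat -> x i = cournot_share Z m.
Proof.
  intros Hbr.
  set (D := Z - sum_upto m x).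
  assert (Hcases : forall i, (i < m)%nat -> (x i = 0 /\ D <= 0) \/ (x i = D /\ 0 < D)).
  { intros i Hi. specialize (Hbr i Hi). unfold best_reply in Hbr.
    destruct Rle_dec; [left|right]; unfold D; lra. }
  pose proof (pos_INR m).
  unfold cournot_share. destruct (Rlt_le_dec 0 D) as [HD|HD].
  - assert (Hall : forall i, (i < m)%nat -> x i = D).
    { intros i Hi. destruct (Hcases i Hi) as [[]|[]]; [lra|assumption]. }
    assert (HZ : Z = (1 + INR m) * D).
    { pose proof (sum_upto_const m x D Hall). unfold D in *. lra. }
    intros i Hi. rewrite Hall by exact Hi.
    destruct Rle_dec; [nra|]. rewrite HZ. field. lra.
  - assert (Hall : forall i, (i < m)%nat -> x i = 0).
    { intros i Hi. destruct (Hcases i Hi) as [[]|[]]; [assumption|lra]. }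
    pose proof (sum_upto_const m x 0 Hall).
    intros i Hi. rewrite Hall by exact Hi.
    destruct Rle_dec; [reflexivity|]. unfold D in *. lra.
Qed.

Lemma cournot_residual Z m :
  Z - INR m * cournot_share Z m = residual_after Z (1 + INR m).
Proof.
  pose proof (pos_INR m). unfold cournot_share, residual_after.
  destruct Rle_dec; [ring|]. field. lra.
Qed.

Definition cumul (n : arrivals) (t : nat) (h : history) : R :=
  sum_upto t (fun s => sum_upto (n s) (fun j => h s j)).

Fixpoint growth (n : arrivals) (t k : nat) : R :=
  match k with O => 1 | S k' => (1 + INR (n t)) * growth n (S t) k' end.

Lemma growth_ge1 n k : forall t, 1 <= growth n t k.
Proof.
  induction k as [|k IH]; intro t; simpl; [lra|].
  pose proof (pos_INR (n t)). specialize (IH (S t)). nra.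
Qed.

Lemma play_split sigma n p : forall q t h,
  play sigma n (p + q) t h = play sigma n q (t + p) (play sigma n p t h).
Proof.
  induction p as [|p IH]; intros q t h; simpl.
  - rewrite Nat.add_0_r. reflexivity.
  - rewrite IH, Nat.add_succ_r. reflexivity.
Qed.

Lemma play_keeps_past sigma n k : forall t h s j,
  (s < t)%nat -> play sigma n k t h s j = h s j.
Proof.
  induction k as [|k IH]; intros t h s j Hs; simpl; [reflexivity|].
  rewrite IH by lia. unfold step. destruct (Nat.eqb_spec s t); [lia|reflexivity].
Qed.

Lemma play_entry sigma n T t j : (t < T)%nat ->
  play sigma n T O (fun _ _ => 0) t j = act sigma t j n (play sigma n t O (fun _ _ => 0)).
Proof.
  intro Ht.
  replace T with (t + S (T - S t))%nat by lia.
  rewrite play_split. cbn [play]. rewrite play_keeps_past by lia.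
  unfold step. rewrite Nat.eqb_refl. reflexivity.
Qed.

Lemma cumul_step sigma n t h :
  cumul n (S t) (step sigma n t h)
  = cumul n t h + sum_upto (n t) (fun j => act sigma t j n h).
Proof.
  unfold cumul. cbn [sum_upto]. f_equal.
  - apply sum_upto_ext. intros s Hs. unfold step.
    destruct (Nat.eqb_spec s t); [lia|reflexivity].
  - apply sum_upto_ext. intros j Hj. unfold step. rewrite Nat.eqb_refl. reflexivity.
Qed.

Lemma period_residual sigma n t h Z :
  (forall j, (j < n t)%nat -> act sigma t j n h = cournot_share (Z - cumul n t h) (n t)) ->
  Z - cumul n (S t) (step sigma n t h) = residual_after (Z - cumul n t h) (1 + INR (n t)).
Proof.
  intro Hact. rewrite cumul_step, (sum_upto_const _ _ _ Hact), <- cournot_residual. ring.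
Qed.

Lemma act_splice sigma t j n w h : act sigma t j (splice t n w) h = act sigma t j n h.
Proof.
  unfold act. f_equal. apply functional_extensionality. intro s.
  unfold trunc_arr, splice. destruct (s <=? t)%nat; reflexivity.
Qed.

Lemma cumul_deviate sigma n w t i x h : (i < n t)%nat ->
  cumul (splice t n w) (S t) (deviate sigma (splice t n w) t i x h)
  = cumul n t h + (sum_upto (n t) (fun j => act sigma t j n h) - act sigma t i n h + x).
Proof.
  intro Hi. unfold cumul. cbn [sum_upto]. f_equal.
  - apply sum_upto_ext. intros s Hs. unfold splice, deviate.
    destruct (Nat.leb_spec s t); [|lia]. destruct (Nat.eqb_spec s t); [lia|reflexivity].
  - unfold splice at 1, deviate. rewrite Nat.leb_refl, Nat.eqb_refl.
    rewrite <- (sum_upto_replace (n t) (fun j => act sigma t j n h) x i Hi).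
    apply sum_upto_ext. intros j Hj. rewrite act_splice. reflexivity.
Qed.

Section Equilibrium.

Variables (a Xbar c : R) (T : nat) (sigma : strategy) (beta : beliefs).
Hypothesis a_pos : 0 < a.
Hypothesis beliefs_proper : forall t i n h, is_belief (beta t i n h).
Hypothesis sigma_equilibrium : equilibrium a Xbar c T sigma beta.

Local Notation Xc := (Xbar - c / a).

Definition residual_law (t k : nat) : Prop :=
  forall n h, Xc - total T n (play sigma n k t h)
              = residual_after (Xc - cumul n t h) (growth n t k).

Lemma profit_residual_form t k n w i x h :
  (S t + k = T)%nat -> (i < n t)%nat -> residual_law (S t) k ->
  profit a Xbar c T sigma (splice t n w) t i x h =
  x * (a * residual_after
             (Xc - cumul n t h
              - (sum_upto (n t) (fun j => act sigma t j n h) - act sigma t i n h) - x)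
             (growth (splice t n w) (S t) k)).
Proof.
  intros Htk Hi Hlaw. unfold profit, price.
  replace (T - S t)%nat with k by lia.
  pose proof (Hlaw (splice t n w) (deviate sigma (splice t n w) t i x h)) as Hres.
  rewrite cumul_deviate in Hres by exact Hi.
  replace (a * (Xbar - total T (splice t n w)
                  (play sigma (splice t n w) k (S t) (deviate sigma (splice t n w) t i x h))) - c)
    with (a * (Xc - total T (splice t n w)
                  (play sigma (splice t n w) k (S t) (deviate sigma (splice t n w) t i x h))))
    by (field; lra).
  rewrite Hres. do 3 f_equal. ring.
Qed.

Lemma period_cournot t k :
  (S t + k = T)%nat -> residual_law (S t) k ->
  forall n h i, (i < n t)%nat -> act sigma t i n h = cournot_share (Xc - cumul n t h) (n t).
Proof.
  intros Htk Hlaw n h.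
  apply (cournot_fixed_point (n t) (fun j => act sigma t j n h)).
  intros i Hi.
  destruct (sigma_equilibrium n t i h ltac:(lia) Hi) as [Hnonneg [v [Hv Hopt]]].
  destruct (beliefs_proper t i n (trunc_hist t h)) as [Hw Hs].
  unfold expected_profit in *.
  set (b := beta t i n (trunc_hist t h)) in *.
  apply (best_reply_unique (weight b) (fun l => growth (splice t n (scenario b l)) (S t) k)
           a _ _ v a_pos Hw Hs (fun l => growth_ge1 _ _ _) Hnonneg).
  - eapply infinite_sum_ext; [|exact Hv]. intro l. cbv beta.
    rewrite (profit_residual_form t k) by assumption. reflexivity.
  - intros x v' Hx Hv'. apply (Hopt x v' Hx).
    eapply infinite_sum_ext; [|exact Hv']. intro l. cbv beta.
    rewrite (profit_residual_form t k) by assumption. reflexivity.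
Qed.

Lemma residual_law_holds k : forall t, (t + k = T)%nat -> residual_law t k.
Proof.
  induction k as [|k IH]; intros t Htk n h.
  - cbn [play growth]. rewrite residual_after_1.
    replace t with T by lia. reflexivity.
  - cbn [play growth].
    assert (Hlaw : residual_law (S t) k) by (apply IH; lia).
    rewrite Hlaw, (period_residual sigma n t h Xc).
    + apply residual_after_compose. pose proof (pos_INR (n t)). lra.
    + intros j Hj. apply (period_cournot t k); [lia|exact Hlaw|exact Hj].
Qed.

Lemma equilibrium_action n h t i : (t < T)%nat -> (i < n t)%nat ->
  act sigma t i n h = cournot_share (Xc - cumul n t h) (n t).
Proof.
  intros Ht Hi. apply (period_cournot t (T - S t)); [lia| |exact Hi].
  apply residual_law_holds. lia.
Qed.

Lemma path_residual n t : 0 < Xc -> (t <= T)%nat ->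
  Xc - cumul n t (play sigma n t O (fun _ _ => 0))
  = Xc / prod_upto t (fun s => 1 + INR (n s)).
Proof.
  intros HXc. induction t as [|t IH]; intro Ht.
  - unfold cumul. cbn [sum_upto prod_upto]. rewrite Rminus_0_r, Rdiv_1_r. reflexivity.
  - replace (S t) with (t + 1)%nat at 2 by lia. rewrite play_split. cbn [play].
    replace (0 + t)%nat with t by lia. replace (t + 1)%nat with (S t) by lia.
    pose proof (prod_upto_ge1 n t). pose proof (pos_INR (n t)).
    rewrite (period_residual sigma n t _ Xc), IH by (lia || (intros; apply equilibrium_action; lia)).
    rewrite residual_after_pos by (apply Rdiv_lt_0_compat; lra).
    cbn [prod_upto]. field. lra.
Qed.

End Equilibrium.

Theorem proposition1 (a Xbar c : R) (T : nat) (sigma : strategy) (beta : beliefs) :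
  0 < a -> 0 <= c -> 0 < Xbar - c / a ->
  (forall t i n h, is_belief (beta t i n h)) ->
  equilibrium a Xbar c T sigma beta ->
  forall n : arrivals,
    let hf := play sigma n T O (fun _ _ => 0) in
    total T n hf = (1 - 1 / prod_upto T (fun s => 1 + INR (n s))) * (Xbar - c / a) /\
    (forall t i : nat, (t < T)%nat -> (i < n t)%nat ->
       hf t i = (Xbar - c / a) / prod_upto (S t) (fun s => 1 + INR (n s))).
Proof.
  intros Ha _ HXc Hbeliefs Heq n hf. split.
  -
    pose proof (path_residual a Xbar c T sigma beta Ha Hbeliefs Heq n T HXc (le_n T)) as HT.
    pose proof (prod_upto_ge1 n T).
    assert (Htot : total T n hf = Xbar - c / a - (Xbar - c / a) / prod_upto T (fun s => 1 + INR (n s))).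
    { rewrite <- HT. unfold hf, total, cumul. ring. }
    rewrite Htot. field. lra.
  -
    intros t i Ht Hi. unfold hf.
    rewrite play_entry, (equilibrium_action a Xbar c T sigma beta), (path_residual a Xbar c T sigma beta)
      by (assumption || lia).
    pose proof (prod_upto_ge1 n t). pose proof (pos_INR (n t)).
    unfold cournot_share. destruct Rle_dec as [Hneg|_].
    + exfalso. assert (0 < (Xbar - c / a) / prod_upto t (fun s => 1 + INR (n s)))
        by (apply Rdiv_lt_0_compat; lra). lra.
    + cbn [prod_upto]. field. lra.
Qed.
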